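(* Let $\mathbb{F}_{q^m}$ be a field extension of $\mathbb{F}=\mathbb{F}_q$ and let $G_i\in\mathbb{F}_{q^m}^{a_i\times n_i}$, $i=1,2$, be matrices of full row rank. Set $G=\begin{pmatrix}G_1&0\\0&G_2\end{pmatrix}\in\mathbb{F}_{q^m}^{(a_1+a_2)\times(n_1+n_2)}$. Let $\mathcal{M}_i=(\mathbb{F}^{n_i},\rho_i)$ and $\mathcal{N}=(\mathbb{F}^{n_1+n_2},\hat\rho)$ be the $q$-matroids represented by $G_1,G_2$ and $G$. Identify $\mathbb{F}^{n_1+n_2}=\mathbb{F}^{n_1}\oplus\mathbb{F}^{n_2}$ in the natural way. (a) If $F=F_1\oplus F_2$ with $F_i$ a flat of $\mathcal{M}_i$, then $F$ is a flat of $\mathcal{N}$. (b) If $O=O_1\oplus O_2$ with $O_i$ an open space of $\mathcal{M}_i$, then $O$ is an open space of $\mathcal{N}$. As a consequence, $\mathcal{Z}(\mathcal{M}_1\oplus\mathcal{M}_2)\subseteq\mathcal{Z}(\mathcal{N})$, and every independent space of $\mathcal{N}$ is an independent space of $\mathcal{M}_1\oplus\mathcal{M}_2$.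
   Context: A $q$-matroid is $\mathcal{M}=(E,\rho)$, $E$ a finite-dimensional $\mathbb{F}_q$-vector space, $\rho$ from subspaces to $\mathbb{Z}_{\ge0}$ with $0\le\rho(V)\le\dim V$, monotone and submodular. For $G\in\mathbb{F}_{q^m}^{k\times n}$ of rank $k$, the $q$-matroid represented by $G$ is $(\mathbb{F}_q^n,\rho)$ with $\rho(V)=\mathrm{rk}(GY^{\mathsf T})$ where $Y$ is any matrix over $\mathbb{F}_q$ with row space $V$. Independent: $\rho(V)=\dim V$. Circuit: dependent subspace all of whose proper subspaces are independent; open: a sum of circuits (empty sum $=0$). Flat: $\rho(F+\langle x\rangle)>\rho(F)$ for all $x\notin F$. Cyclic core: $\mathrm{cyc}(V)=\{x\in V\mid\rho(W)=\rho(V)\text{ for all }W\le V\text{ with }W+\langle x\rangle=V\}$; cyclic: $\mathrm{cyc}(V)=V$ (equivalently, open). $\mathcal{Z}(\mathcal{M})$: set of cyclic flats. Direct sum: for $E=E_1\oplus E_2$ with projections $\pi_i$, $\mathcal{M}_1\oplus\mathcal{M}_2=(E,\rho)$ where $\rho(V)=\dim V+\min_{X\le V}(\rho_1(\pi_1(X))+\rho_2(\pi_2(X))-\dim X)$. *)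

From HB Require Import structures.
From mathcomp Require Import all_boot all_order all_algebra all_field.
Set Implicit Arguments. Unset Strict Implicit. Unset Printing Implicit Defensive.
Import GRing.Theory.
Local Open Scope ring_scope.

(* Subspaces of F^n are represented by square matrices 'M[F]_n through their
   row space (mxalgebra, scope %MS); vectors are row vectors 'rV[F]_n.
   A rank function is rho : 'M[F]_n -> nat, meant to depend only on the
   row space. *)

Section QMatroid.
Variables (F : fieldType) (n : nat).
Implicit Types (rho : 'M[F]_n -> nat) (V W X : 'M[F]_n).

Definition qindep rho V : Prop := rho V = \rank V.

Definition qcircuit rho V : Prop :=
  ~ qindep rho V /\ (forall W, (W < V)%MS -> qindep rho W).

Definition qopen rho V : Prop :=
  exists s : seq 'M[F]_n, (forall C, C \in s -> qcircuit rho C) /\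
                         (V == \sum_(C <- s) C)%MS.

Definition qflat rho V : Prop :=
  forall x : 'rV[F]_n, ~~ (x <= V)%MS -> (rho V < rho (V + x)%MS)%N.

Definition in_cyc rho V (x : 'rV[F]_n) : Prop :=
  (x <= V)%MS /\
  (forall W, (W <= V)%MS -> (W + x == V)%MS -> rho W = rho V).

Definition qcyclic rho V : Prop :=
  forall x : 'rV[F]_n, (x <= V)%MS <-> in_cyc rho V x.

Definition qcyclic_flat rho V : Prop := qcyclic rho V /\ qflat rho V.

End QMatroid.

(* The q-matroid represented by G in L^{k x n}, L an extension of F:
   rho(V) = rk(G Y^T) with Y over F having row space V. *)
Definition qrank (F : fieldType) (L : fieldExtType F) (k n : nat)
  (G : 'M[L]_(k, n)) (V : 'M[F]_n) : nat :=
  \rank (G *m (map_mx (in_alg L) V)^T).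

(* Direct sum on F^{n1+n2} = F^{n1} (+) F^{n2} (first n1 coordinates, last n2):
   rho(V) = dim V + min_{X <= V} (rho1(pi1 X) + rho2(pi2 X) - dim X),
   written equivalently in nat as min_{X <= V} (rho1(pi1 X) + rho2(pi2 X)
   + (dim V - dim X)), since dim X <= dim V; X = V gives a value, and the
   default index rank V is the value at X = 0 (so it does not change the min). *)
Definition dsum_rank (F : finFieldType) (n1 n2 : nat)
  (rho1 : 'M[F]_n1 -> nat) (rho2 : 'M[F]_n2 -> nat)
  (V : 'M[F]_(n1 + n2)) : nat :=
  \big[minn/(\rank V)%N]_(X : 'M[F]_(n1 + n2) | (X <= V)%MS)
     (rho1 (<<lsubmx X>>)%MS + rho2 (<<rsubmx X>>)%MS + (\rank V - \rank X))%N.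

Definition dsum_space (F : fieldType) (n1 n2 : nat)
  (F1 : 'M[F]_n1) (F2 : 'M[F]_n2) : 'M[F]_(n1 + n2) :=
  block_mx F1 0 0 F2.

(* The rank of N on a block space A (+) B is rho1(A) + rho2(B), and a vector
   (x1, x2) raises it iff x1 or x2 raises the corresponding summand rank; hence
   flats add up, and circuits of M1 and M2 embed as circuits of N, so open
   spaces add up.  For a cyclic flat Z of M1 (+) M2, the minimum defining its
   rank is attained at X = Z: a smaller minimiser X extends to a hyperplane W of
   Z with X <= W, and then rho(W) < rho(Z), against cyclicity.  Thus
   rho(Z) = rho1(pi1 Z) + rho2(pi2 Z), and flatness forces Z = Z1 (+) Z2 with
   Zi = pi_i Z cyclic flats of Mi.  Every hyperplane W of Z1 (+) Z2 contains
   some K1 (+) K2 with Ki of codimension at most one in Zi, so rho_N(W) =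
   rho_N(Z): Z is cyclic in N.  Finally, every subspace X of an N-independent
   space I has dim X = rho_N(X) <= rho1(pi1 X) + rho2(pi2 X), so every term of
   the minimum defining the direct-sum rank of I is at least dim I. *)

From HB Require Import structures.
From mathcomp Require Import all_boot all_order all_algebra all_field.
From mathcomp Require Import zify.
Set Implicit Arguments. Unset Strict Implicit. Unset Printing Implicit Defensive.
Import Order.TTheory GRing.Theory.
Local Open Scope ring_scope.

Section Subspaces.
Variable F : fieldType.

Lemma rank_adds_row_leq m n (W : 'M[F]_(m, n)) (x : 'rV[F]_n) :
  (\rank (W + x)%MS <= (\rank W).+1)%N.
Proof.
apply: leq_trans (mxrank_adds_leqif W x) _.
by rewrite -[X in (_ <= X)%N]addn1 leq_add2l rank_leq_row.
Qed.

Lemma ltn_rank_adds_row m n (W : 'M[F]_(m, n)) (x : 'rV[F]_n) :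
  ~~ (x <= W)%MS -> (\rank W < \rank (W + x)%MS)%N.
Proof.
by move=> xW; rewrite (ltn_leqif (mxrank_leqif_sup (addsmxSl _ _))) addsmx_sub submx_refl.
Qed.

Lemma codim1_adds_row n (W Z : 'M[F]_n) :
  (W <= Z)%MS -> (\rank Z <= (\rank W).+1)%N ->
  exists2 x : 'rV[F]_n, (x <= Z)%MS & (W + x == Z)%MS.
Proof.
move=> sWZ rZ; have [sZW | /row_subPn[i Zi_notW]] := boolP (Z <= W)%MS.
  exists 0; rewrite ?sub0mx // addsmx_sub sWZ sub0mx /=.
  exact: submx_trans sZW (addsmxSl _ _).
exists (row i Z); first exact: row_sub.
have sWxZ : (W + row i Z <= Z)%MS by rewrite addsmx_sub sWZ row_sub.
rewrite -(geq_leqif (mxrank_leqif_eq sWxZ)).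
exact: leq_trans rZ (ltn_rank_adds_row Zi_notW).
Qed.

Lemma exists_hyperplane_between n (X Z : 'M[F]_n) :
  (X <= Z)%MS -> ~~ (Z <= X)%MS ->
  exists W : 'M[F]_n, [/\ (X <= W)%MS, (W <= Z)%MS & \rank Z = (\rank W).+1].
Proof.
move=> sXZ /row_subPn[i Zi_notX]; set x := row i Z; set U := (X + x)%MS.
have sUZ : (U <= Z)%MS by rewrite addsmx_sub sXZ row_sub.
exists (X + (Z :\: U))%MS; split; first exact: addsmxSl.
  by rewrite addsmx_sub sXZ diffmxSl.
have sZWx : (Z <= X + (Z :\: U) + x)%MS.
  apply: submx_trans (_ : Z <= (Z :\: U) + (Z :&: U))%MS _.
    by rewrite addsmx_diff_cap_eq.
  rewrite addsmx_sub (capmx_idPr sUZ) addsmx_sub addsmxSr.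
  rewrite (submx_trans (addsmxSr X _) (addsmxSl _ x)).
  by rewrite (submx_trans (addsmxSl X _) (addsmxSl _ x)).
have rU : \rank U = (\rank X).+1.
  by apply/eqP; rewrite eqn_leq rank_adds_row_leq ltn_rank_adds_row.
have := mxrank_cap_compl Z U; rewrite (capmx_idPr sUZ) rU.
have [rW _] := mxrank_adds_leqif X (Z :\: U)%MS.
have := leq_trans (mxrankS sZWx) (rank_adds_row_leq _ x).
lia.
Qed.

Lemma rank_cap_codim1 m n (W Z : 'M[F]_n) (R : 'M[F]_(m, n)) :
  (W <= Z)%MS -> (R <= Z)%MS -> (\rank Z <= (\rank W).+1)%N ->
  (\rank R <= (\rank (W :&: R)%MS).+1)%N.
Proof.
move=> sWZ sRZ rZ; have := mxrank_sum_cap W R.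
have := mxrankS (_ : (W + R <= Z)%MS); rewrite addsmx_sub sWZ sRZ => /(_ isT).
lia.
Qed.

Lemma row_free_pullback_codim1 p n (P : 'M[F]_(p, n)) (A : 'M[F]_p) (W Z : 'M[F]_n) :
  row_free P -> (W <= Z)%MS -> (A *m P <= Z)%MS -> (\rank Z <= (\rank W).+1)%N ->
  exists K : 'M[F]_p,
    [/\ (K <= A)%MS, (\rank A <= (\rank K).+1)%N & (K *m P <= W)%MS].
Proof.
move=> freeP sWZ sAPZ rZ; set C := (W :&: A *m P)%MS.
have defC : C *m pinvmx P *m P = C.
  by apply: mulmxKpV; apply: submx_trans (capmxSr _ _) (submxMl _ _).
have genCP : (<<C *m pinvmx P>> *m P :=: C)%MS.
  by rewrite -[X in (_ :=: X)%MS]defC; apply/eqmxMr/genmxE.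
exists <<C *m pinvmx P>>%MS; split.
- by rewrite -(submxMfree _ _ freeP) genCP capmxSr.
- rewrite -(mxrankMfree _ freeP) -(mxrankMfree _ freeP) genCP.
  exact: rank_cap_codim1 sWZ sAPZ rZ.
- by rewrite genCP capmxSl.
Qed.

Lemma mxrankM_submx m1 m2 n p
    (A : 'M[F]_(m1, n)) (B : 'M[F]_(m2, n)) (M : 'M[F]_(n, p)) :
  (A <= B)%MS -> \rank (B *m M) = \rank B -> \rank (A *m M) = \rank A.
Proof.
move=> sAB rBM; have := mxrank_mul_ker B M; rewrite rBM -[X in _ = X]addn0 => /addnI.
move/eqP; rewrite mxrank_eq0 -submx0 => kerB0.
have := mxrank_mul_ker A M; rewrite (_ : \rank (A :&: kermx M)%MS = 0%N) ?addn0 //.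
by apply/eqP; rewrite mxrank_eq0 -submx0; apply: submx_trans kerB0; apply: capmxS.
Qed.

End Subspaces.

Lemma qcyclicP (F : fieldType) n (rho : 'M[F]_n -> nat) (Z : 'M[F]_n) :
  qcyclic rho Z <->
  (forall W, (W <= Z)%MS -> (\rank Z <= (\rank W).+1)%N -> rho W = rho Z).
Proof.
split=> [cycZ W sWZ rZ | hypZ x].
  have [x sxZ defZ] := codim1_adds_row sWZ rZ.
  by have [_] := (cycZ x).1 sxZ; apply.
split=> [sxZ | []//]; split=> // W sWZ /andP[_ sZWx]; apply: hypZ sWZ _.
exact: leq_trans (mxrankS sZWx) (rank_adds_row_leq W x).
Qed.

Section MonotoneRank.
Variables (F : fieldType) (n : nat) (rho : 'M[F]_n -> nat).
Hypothesis rho_mono : forall A B, (A <= B)%MS -> (rho A <= rho B)%N.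

Lemma mono_eqmx A B : (A :=: B)%MS -> rho A = rho B.
Proof. by move=> eqAB; apply/eqP; rewrite eqn_leq !rho_mono ?eqAB. Qed.

Lemma qflat_eqmx Z Z' : (Z :=: Z')%MS -> qflat rho Z -> qflat rho Z'.
Proof.
move=> eqZ flatZ x; rewrite -eqZ -(mono_eqmx eqZ).
by rewrite -(mono_eqmx (adds_eqmx eqZ (eqmx_refl x))); apply: flatZ.
Qed.

Lemma qcyclic_eqmx Z Z' : (Z :=: Z')%MS -> qcyclic rho Z -> qcyclic rho Z'.
Proof.
by move=> eqZ; rewrite !qcyclicP => cycZ W; rewrite -!eqZ -(mono_eqmx eqZ); apply: cycZ.
Qed.

End MonotoneRank.

Section Embedding.
Variables (F : fieldType) (p n : nat) (P : 'M[F]_(p, n)).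
Variables (rhoP : 'M[F]_p -> nat) (rho : 'M[F]_n -> nat).
Hypothesis freeP : row_free P.
Hypothesis rho_mono : forall A B, (A <= B)%MS -> (rho A <= rho B)%N.
Hypothesis rho_embed : forall A, rho <<A *m P>>%MS = rhoP A.

Lemma qcircuit_embed C : qcircuit rhoP C -> qcircuit rho <<C *m P>>%MS.
Proof.
rewrite /qcircuit /qindep rho_embed mxrank_gen mxrankMfree // => -[depC indepC].
split=> // W; rewrite ltmxE !genmxE => /andP[sWCP CP_notW].
have defW : (<<W *m pinvmx P>> *m P :=: W)%MS.
  apply: eqmx_trans (eqmxMr _ (genmxE _)) _.
  by rewrite mulmxKpV //; apply: submx_trans sWCP (submxMl _ _).
rewrite -(mono_eqmx rho_mono (eqmx_trans (genmxE _) defW)) rho_embed.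
rewrite -defW mxrankMfree // indepC // ltmxE -!(submxMfree _ _ freeP) defW sWCP.
by apply: contra CP_notW; rewrite defW.
Qed.

End Embedding.

Section DirectSumSpace.
Variables (F : fieldType) (n1 n2 : nat).
Implicit Types (A : 'M[F]_n1) (B : 'M[F]_n2) (V : 'M[F]_(n1 + n2)).

Lemma row_mx_sub_diag_block_mx m m1 m2 p1 p2
    (x : 'M[F]_(m, p1)) (y : 'M[F]_(m, p2)) (A : 'M[F]_(m1, p1)) (B : 'M[F]_(m2, p2)) :
  (row_mx x y <= block_mx A 0 0 B)%MS = (x <= A)%MS && (y <= B)%MS.
Proof.
apply/idP/andP => [/submxP[D] | [/submxP[D1 ->] /submxP[D2 ->]]].
  rewrite -[D]hsubmxK mul_row_block !mulmx0 addr0 add0r => /eq_row_mx[-> ->].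
  by rewrite !submxMl.
by apply/submxP; exists (row_mx D1 D2); rewrite mul_row_block !mulmx0 addr0 add0r.
Qed.

Lemma sub_dsum_spaceE V A B :
  (V <= dsum_space A B)%MS = (lsubmx V <= A)%MS && (rsubmx V <= B)%MS.
Proof. by rewrite -{1}[V]hsubmxK row_mx_sub_diag_block_mx. Qed.

Lemma dsum_space_sub A B A' B' :
  (dsum_space A B <= dsum_space A' B')%MS = (A <= A')%MS && (B <= B')%MS.
Proof.
by rewrite {1}/dsum_space block_mxEv col_mx_sub !row_mx_sub_diag_block_mx !sub0mx andbT.
Qed.

Lemma sub_dsum_space_split V : (V <= dsum_space <<lsubmx V>> <<rsubmx V>>)%MS.
Proof. by rewrite sub_dsum_spaceE !genmxE !submx_refl. Qed.

Definition dsum_inl : 'M[F]_(n1, n1 + n2) := row_mx 1%:M 0.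
Definition dsum_inr : 'M[F]_(n2, n1 + n2) := row_mx 0 1%:M.

Lemma row_free_dsum_inl : row_free dsum_inl.
Proof. by rewrite /row_free rank_row_mx0 mxrank1. Qed.

Lemma row_free_dsum_inr : row_free dsum_inr.
Proof. by rewrite /row_free rank_row_0mx mxrank1. Qed.

Lemma dsum_spaceE A B : (dsum_space A B :=: A *m dsum_inl + B *m dsum_inr)%MS.
Proof.
rewrite /dsum_space /dsum_inl /dsum_inr block_mxEv !mul_mx_row !mulmx1 !mulmx0.
exact: eqmx_sym (addsmxE _ _).
Qed.

End DirectSumSpace.

Arguments dsum_inl {F} n1 n2.
Arguments dsum_inr {F} n1 n2.

Lemma genmx_sumsmx_seqMr (F : fieldType) p n (s : seq 'M[F]_p) (P : 'M[F]_(p, n)) :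
  <<(\sum_(C <- s) C)%MS *m P>>%MS = (\sum_(C <- s) <<C *m P>>)%MS.
Proof.
apply: (big_morph (fun X => <<X *m P>>%MS)) => [A B|]; last by rewrite mul0mx genmx0.
by rewrite -genmx_adds; apply/eq_genmx/addsmxMr.
Qed.

Definition split_rank (F : fieldType) (n1 n2 : nat)
    (rho1 : 'M[F]_n1 -> nat) (rho2 : 'M[F]_n2 -> nat) (V : 'M[F]_(n1 + n2)) : nat :=
  (rho1 <<lsubmx V>>%MS + rho2 <<rsubmx V>>%MS)%N.

Section BlockAdditiveRank.
Variables (F : fieldType) (n1 n2 : nat).
Variables (rho1 : 'M[F]_n1 -> nat) (rho2 : 'M[F]_n2 -> nat).
Variable rho : 'M[F]_(n1 + n2) -> nat.
Hypothesis rho1_0 : rho1 0 = 0%N.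
Hypothesis rho2_0 : rho2 0 = 0%N.
Hypothesis rho_mono : forall V W, (V <= W)%MS -> (rho V <= rho W)%N.
Hypothesis rho_dsum : forall A B, rho (dsum_space A B) = (rho1 A + rho2 B)%N.

Lemma rho_dsum_inl A : rho <<A *m dsum_inl n1 n2>>%MS = rho1 A.
Proof.
rewrite -[rho1 A]addn0 -rho2_0 -rho_dsum; apply: (mono_eqmx rho_mono).
apply: eqmx_trans (genmxE _) (eqmx_sym (eqmx_trans (dsum_spaceE _ _) _)).
by rewrite mul0mx; apply: addsmx0.
Qed.

Lemma rho_dsum_inr B : rho <<B *m dsum_inr n1 n2>>%MS = rho2 B.
Proof.
rewrite -[rho2 B]add0n -rho1_0 -rho_dsum; apply: (mono_eqmx rho_mono).
apply: eqmx_trans (genmxE _) (eqmx_sym (eqmx_trans (dsum_spaceE _ _) _)).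
by rewrite mul0mx; apply: adds0mx.
Qed.

Lemma qopen_dsum_space O1 O2 :
  qopen rho1 O1 -> qopen rho2 O2 -> qopen rho (dsum_space O1 O2).
Proof.
case=> [s1 [circ1 /eqmxP defO1]] [s2 [circ2 /eqmxP defO2]].
exists ([seq <<C *m dsum_inl n1 n2>>%MS | C <- s1] ++
        [seq <<C *m dsum_inr n1 n2>>%MS | C <- s2]); split.
  move=> C; rewrite mem_cat => /orP[] /mapP[C' sC' ->].
    exact: qcircuit_embed (row_free_dsum_inl _ _ _) rho_mono rho_dsum_inl _ (circ1 _ _).
  exact: qcircuit_embed (row_free_dsum_inr _ _ _) rho_mono rho_dsum_inr _ (circ2 _ _).
apply/eqmxP; rewrite big_cat !big_map -!genmx_sumsmx_seqMr.
apply: eqmx_trans (dsum_spaceE _ _) (adds_eqmx _ _);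
  by apply: eqmx_trans (eqmxMr _ _) (eqmx_sym (genmxE _)).
Qed.

Lemma qcyclic_dsum_space Z1 Z2 :
  qcyclic rho1 Z1 -> qcyclic rho2 Z2 -> qcyclic rho (dsum_space Z1 Z2).
Proof.
rewrite !qcyclicP => cyc1 cyc2 W sWZ rZ.
have [sZ1 sZ2] : (Z1 *m dsum_inl n1 n2 <= dsum_space Z1 Z2)%MS /\
                 (Z2 *m dsum_inr n1 n2 <= dsum_space Z1 Z2)%MS.
  by rewrite !dsum_spaceE addsmxSl addsmxSr.
have [K1 [sK1 rK1 sK1W]] :=
  row_free_pullback_codim1 (row_free_dsum_inl _ _ _) sWZ sZ1 rZ.
have [K2 [sK2 rK2 sK2W]] :=
  row_free_pullback_codim1 (row_free_dsum_inr _ _ _) sWZ sZ2 rZ.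
apply/eqP; rewrite eqn_leq rho_mono //= rho_dsum -(cyc1 _ sK1 rK1) -(cyc2 _ sK2 rK2).
by rewrite -rho_dsum rho_mono // dsum_spaceE addsmx_sub sK1W.
Qed.

Lemma rho_le_split_rank V : (rho V <= split_rank rho1 rho2 V)%N.
Proof. by rewrite /split_rank -rho_dsum rho_mono ?sub_dsum_space_split. Qed.

End BlockAdditiveRank.

Lemma bigmin_attained (I : finType) (P : pred I) (F : I -> nat) x0 j :
  P j -> (F j <= x0)%N -> exists2 i, P i & \big[minn/x0]_(i | P i) F i = F i.
Proof.
move=> Pj Fj_le; set m := \big[minn/x0]_(i | P i) F i.
have [m_x0 | //] : m = x0 \/ exists2 i, P i & m = F i.
  apply: (big_ind (fun v => v = x0 \/ exists2 i, P i & v = F i)); first by left.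
    by move=> u v Qu Qv; rewrite /minn; case: ifP.
  by move=> i Pi; right; exists i.
exists j => //; apply/eqP; rewrite eqn_leq {2}m_x0 Fj_le andbT.
by rewrite /m -minEnat -leEnat; apply: bigmin_le_cond.
Qed.

Section DirectSumRank.
Variables (F : finFieldType) (n1 n2 : nat).
Variables (rho1 : 'M[F]_n1 -> nat) (rho2 : 'M[F]_n2 -> nat).
Hypothesis rho1_0 : rho1 0 = 0%N.
Hypothesis rho2_0 : rho2 0 = 0%N.
Hypothesis rho1_mono : forall A A', (A <= A')%MS -> (rho1 A <= rho1 A')%N.
Hypothesis rho2_mono : forall B B', (B <= B')%MS -> (rho2 B <= rho2 B')%N.
Implicit Types (A : 'M[F]_n1) (B : 'M[F]_n2) (V W X Y Z : 'M[F]_(n1 + n2)).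
Local Notation r := (dsum_rank rho1 rho2).
Local Notation s := (split_rank rho1 rho2).

Lemma split_rankS X Y : (X <= Y)%MS -> (s X <= s Y)%N.
Proof.
move=> sXY; have := submx_trans sXY (sub_dsum_space_split Y).
rewrite sub_dsum_spaceE => /andP[sl sr].
by apply: leq_add; [apply: rho1_mono | apply: rho2_mono]; rewrite genmxE.
Qed.

Lemma split_rank_dsum A B : s (dsum_space A B) = (rho1 A + rho2 B)%N.
Proof.
rewrite /split_rank /dsum_space block_mxEh row_mxKl row_mxKr.
congr addn; [apply: (mono_eqmx rho1_mono) | apply: (mono_eqmx rho2_mono)];
  apply: eqmx_trans (genmxE _) (eqmx_trans (eqmx_sym (addsmxE _ _)) _).
  exact: addsmx0.
exact: adds0mx.
Qed.

Lemma dsum_rank_le X V : (X <= V)%MS -> (r V <= s X + (\rank V - \rank X))%N.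
Proof. by rewrite /dsum_rank -minEnat -leEnat; apply: bigmin_le_cond. Qed.

Lemma dsum_rank_le_split V : (r V <= s V)%N.
Proof. by have := dsum_rank_le (submx_refl V); rewrite subnn addn0. Qed.

Lemma dsum_rank_le_rank V : (r V <= \rank V)%N.
Proof. by rewrite /dsum_rank -minEnat -leEnat; apply: bigmin_le_id. Qed.

Lemma dsum_rank_attained V :
  exists2 X, (X <= V)%MS & r V = (s X + (\rank V - \rank X))%N.
Proof.
apply: (bigmin_attained (j := 0)); first exact: sub0mx.
by rewrite /split_rank !linear0 !genmx0 rho1_0 rho2_0 mxrank0 subn0.
Qed.

Lemma split_rank_le_cyclic Z : qcyclic r Z -> (s Z <= r Z)%N.
Proof.
move=> /qcyclicP cycZ; have [X sXZ defr] := dsum_rank_attained Z.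
have [sZX | Z_notX] := boolP (Z <= X)%MS.
  by rewrite defr (leq_trans (split_rankS sZX)) ?leq_addr.
have [W [sXW sWZ rZ]] := exists_hyperplane_between sXZ Z_notX.
have := dsum_rank_le sXW; rewrite (cycZ W sWZ) ?rZ // defr.
have := mxrankS sXW; lia.
Qed.

Lemma split_rank_lt_flat Z A B :
  qcyclic r Z -> qflat r Z -> (Z <= dsum_space A B)%MS ->
  ~~ (dsum_space A B <= Z)%MS -> (s Z < rho1 A + rho2 B)%N.
Proof.
move=> cycZ flatZ sZAB /row_subPn[i ABi_notZ].
rewrite -split_rank_dsum; apply: leq_ltn_trans (split_rank_le_cyclic cycZ) _.
apply: leq_trans (flatZ _ ABi_notZ) _; apply: leq_trans (dsum_rank_le_split _) _.
by apply: split_rankS; rewrite addsmx_sub sZAB row_sub.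
Qed.

Lemma dsum_split_eqmx Z : qcyclic r Z -> qflat r Z ->
  (Z :=: dsum_space <<lsubmx Z>> <<rsubmx Z>>)%MS.
Proof.
move=> cycZ flatZ; apply/eqmxP; rewrite sub_dsum_space_split /=.
apply: contraT => notsub.
by have := split_rank_lt_flat cycZ flatZ (sub_dsum_space_split Z) notsub; rewrite ltnn.
Qed.

Lemma split_rank_codim1 Z V : qcyclic r Z -> (V <= Z)%MS ->
  (\rank Z <= (\rank V).+1)%N -> (s Z <= s V)%N.
Proof.
move=> cycZ sVZ rZ; apply: leq_trans (split_rank_le_cyclic cycZ) _.
by move/qcyclicP: cycZ => /(_ V sVZ rZ) <-; apply: dsum_rank_le_split.
Qed.

Section CyclicFlat.
Variable Z : 'M[F]_(n1 + n2).
Hypotheses (cycZ : qcyclic r Z) (flatZ : qflat r Z).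
Local Notation Z1 := <<lsubmx Z>>%MS.
Local Notation Z2 := <<rsubmx Z>>%MS.

Let defZ := dsum_split_eqmx cycZ flatZ.

Lemma qflat_lsplit : qflat rho1 Z1.
Proof.
move=> x x_notZ1; rewrite -(ltn_add2r (rho2 Z2)).
apply: split_rank_lt_flat => //; rewrite defZ dsum_space_sub submx_refl ?andbT.
  exact: addsmxSl.
by apply: contra x_notZ1; apply: submx_trans (addsmxSr _ _).
Qed.

Lemma qflat_rsplit : qflat rho2 Z2.
Proof.
move=> x x_notZ2; rewrite -(ltn_add2l (rho1 Z1)).
apply: split_rank_lt_flat => //; rewrite defZ dsum_space_sub submx_refl //=.
  exact: addsmxSl.
by apply: contra x_notZ2; apply: submx_trans (addsmxSr _ _).
Qed.

Lemma qcyclic_lsplit : qcyclic rho1 Z1.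
Proof.
apply/qcyclicP => K sKZ1 rZ1; apply/eqP; rewrite eqn_leq rho1_mono //=.
have sKZ : (dsum_space K Z2 <= Z)%MS by rewrite defZ dsum_space_sub sKZ1 submx_refl.
have rKZ : (\rank Z <= (\rank (dsum_space K Z2)).+1)%N.
  by rewrite defZ /dsum_space !rank_diag_block_mx -addSn leq_add2r.
by have := split_rank_codim1 cycZ sKZ rKZ; rewrite split_rank_dsum leq_add2r.
Qed.

Lemma qcyclic_rsplit : qcyclic rho2 Z2.
Proof.
apply/qcyclicP => K sKZ2 rZ2; apply/eqP; rewrite eqn_leq rho2_mono //=.
have sKZ : (dsum_space Z1 K <= Z)%MS by rewrite defZ dsum_space_sub sKZ2 submx_refl.
have rKZ : (\rank Z <= (\rank (dsum_space Z1 K)).+1)%N.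
  by rewrite defZ /dsum_space !rank_diag_block_mx -addnS leq_add2l.
by have := split_rank_codim1 cycZ sKZ rKZ; rewrite split_rank_dsum leq_add2l.
Qed.

End CyclicFlat.

Lemma dsum_rank_cyclic_flat Z : qcyclic_flat r Z ->
  exists (Z1 : 'M[F]_n1) (Z2 : 'M[F]_n2),
    [/\ (Z :=: dsum_space Z1 Z2)%MS, qcyclic_flat rho1 Z1 & qcyclic_flat rho2 Z2].
Proof.
case=> cycZ flatZ; exists <<lsubmx Z>>%MS, <<rsubmx Z>>%MS; split.
- exact: dsum_split_eqmx.
- by split; [apply: qcyclic_lsplit | apply: qflat_lsplit].
- by split; [apply: qcyclic_rsplit | apply: qflat_rsplit].
Qed.

Lemma dsum_rank_indep I :
  (forall X, (X <= I)%MS -> (\rank X <= s X)%N) -> qindep r I.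
Proof.
move=> rX_le; apply/eqP; rewrite eqn_leq dsum_rank_le_rank /=.
rewrite /dsum_rank -minEnat -leEnat; apply/bigmin_geP; split=> // X sXI.
rewrite leEnat -{1}(subnKC (mxrankS sXI)) leq_add2r.
exact: rX_le.
Qed.

End DirectSumRank.

Section Representable.
Variables (Fq : fieldType) (L : fieldExtType Fq).

Definition qspan a n m (G : 'M[L]_(a, n)) (V : 'M[Fq]_(m, n)) : 'M[L]_(m, a) :=
  map_mx (in_alg L) V *m G^T.

Variables (a n : nat) (G : 'M[L]_(a, n)).
Implicit Types V W : 'M[Fq]_n.

Lemma qrankE V : qrank G V = \rank (qspan G V).
Proof. by rewrite /qrank /qspan -mxrank_tr trmx_mul trmxK. Qed.

Lemma qspanS m1 m2 (V : 'M[Fq]_(m1, n)) (W : 'M[Fq]_(m2, n)) :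
  (V <= W)%MS -> (qspan G V <= qspan G W)%MS.
Proof. by move=> sVW; rewrite submxMr // map_submx. Qed.

Lemma qrank_mono V W : (V <= W)%MS -> (qrank G V <= qrank G W)%N.
Proof. by move=> sVW; rewrite !qrankE mxrankS ?qspanS. Qed.

Lemma qrank0 : qrank G 0 = 0%N.
Proof. by rewrite qrankE /qspan map_mx0 mul0mx mxrank0. Qed.

Lemma ltn_qrank_adds V m (x : 'M[Fq]_(m, n)) :
  (qrank G V < qrank G (V + x)%MS)%N = ~~ (qspan G x <= qspan G V)%MS.
Proof.
have defVx : (qspan G (V + x)%MS :=: qspan G V + qspan G x)%MS.
  apply/eqmxP/andP; split; last by rewrite addsmx_sub !qspanS ?addsmxSl ?addsmxSr.
  have sVx : ((V + x)%MS <= col_mx V x)%MS by rewrite addsmxE.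
  by apply: submx_trans (qspanS sVx) _; rewrite /qspan map_col_mx mul_col_mx addsmxE.
rewrite !qrankE defVx (ltn_leqif (mxrank_leqif_sup (addsmxSl _ _))).
by rewrite addsmx_sub submx_refl.
Qed.

Lemma qflatP V :
  qflat (qrank G) V <-> forall x : 'rV[Fq]_n, (qspan G x <= qspan G V)%MS -> (x <= V)%MS.
Proof.
split=> [flatV x | hypV x x_notV].
  by apply: contraTT => /flatV; rewrite ltn_qrank_adds.
by rewrite ltn_qrank_adds; apply: contra x_notV; apply: hypV.
Qed.

Lemma qindep_sub I X : qindep (qrank G) I -> (X <= I)%MS -> qindep (qrank G) X.
Proof.
rewrite /qindep !qrankE /qspan -(mxrank_map (in_alg L) I) -(mxrank_map (in_alg L) X).
by move=> indepI sXI; apply: mxrankM_submx indepI; rewrite map_submx.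
Qed.

End Representable.

Section BlockRepresentation.
Variables (Fq : fieldType) (L : fieldExtType Fq).
Variables (a1 a2 n1 n2 : nat) (G1 : 'M[L]_(a1, n1)) (G2 : 'M[L]_(a2, n2)).
Local Notation G := (block_mx G1 0 0 G2 : 'M[L]_(a1 + a2, n1 + n2)).

Lemma qspan_row_mx m (x : 'M[Fq]_(m, n1)) (y : 'M[Fq]_(m, n2)) :
  qspan G (row_mx x y) = row_mx (qspan G1 x) (qspan G2 y).
Proof.
by rewrite /qspan tr_block_mx !trmx0 map_row_mx mul_row_block !mulmx0 addr0 add0r.
Qed.

Lemma qspan_dsum_space A B :
  qspan G (dsum_space A B) = block_mx (qspan G1 A) 0 0 (qspan G2 B).
Proof.
rewrite /dsum_space block_mxEv [RHS]block_mxEv /qspan map_col_mx mul_col_mx.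
by rewrite -!/(qspan _ _) !qspan_row_mx /qspan !map_mx0 !mul0mx.
Qed.

Lemma qrank_dsum_space A B :
  qrank G (dsum_space A B) = (qrank G1 A + qrank G2 B)%N.
Proof. by rewrite !qrankE qspan_dsum_space rank_diag_block_mx. Qed.

Lemma qflat_dsum_space F1 F2 :
  qflat (qrank G1) F1 -> qflat (qrank G2) F2 -> qflat (qrank G) (dsum_space F1 F2).
Proof.
move=> /qflatP flat1 /qflatP flat2; apply/qflatP => x.
rewrite -[x]hsubmxK qspan_row_mx qspan_dsum_space !row_mx_sub_diag_block_mx.
by case/andP=> /flat1 -> /flat2 ->.
Qed.

End BlockRepresentation.

Theorem theorem6p6 (Fq : finFieldType) (L : fieldExtType Fq)
  (a1 a2 n1 n2 : nat) (G1 : 'M[L]_(a1, n1)) (G2 : 'M[L]_(a2, n2))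
  (hG1 : row_free G1) (hG2 : row_free G2) :
  let G : 'M[L]_(a1 + a2, n1 + n2) := block_mx G1 0 0 G2 in
  let rho1 := qrank G1 in
  let rho2 := qrank G2 in
  let rhoN := qrank G in
  let rhoS := dsum_rank rho1 rho2 in
  (forall (F1 : 'M[Fq]_n1) (F2 : 'M[Fq]_n2),
      qflat rho1 F1 -> qflat rho2 F2 -> qflat rhoN (dsum_space F1 F2)) /\
  (forall (O1 : 'M[Fq]_n1) (O2 : 'M[Fq]_n2),
      qopen rho1 O1 -> qopen rho2 O2 -> qopen rhoN (dsum_space O1 O2)) /\
  (forall Z : 'M[Fq]_(n1 + n2), qcyclic_flat rhoS Z -> qcyclic_flat rhoN Z) /\
  (forall I : 'M[Fq]_(n1 + n2), qindep rhoN I -> qindep rhoS I).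
Proof.
move=> G rho1 rho2 rhoN rhoS.
have monoN := qrank_mono G; have dsumN := qrank_dsum_space G1 G2.
split; [|split; [|split]].
- exact: qflat_dsum_space.
- exact: qopen_dsum_space (qrank0 G1) (qrank0 G2) monoN dsumN.
- move=> Z /(dsum_rank_cyclic_flat (qrank0 G1) (qrank0 G2) (qrank_mono G1) (qrank_mono G2)).
  case=> Z1 [Z2 [defZ [cyc1 flat1] [cyc2 flat2]]]; split.
    apply: (qcyclic_eqmx monoN (eqmx_sym defZ)).
    exact: (qcyclic_dsum_space monoN dsumN cyc1 cyc2).
  apply: (qflat_eqmx monoN (eqmx_sym defZ)).
  exact: (qflat_dsum_space flat1 flat2).
- move=> I indepI; apply: dsum_rank_indep => X sXI.
  by rewrite -(qindep_sub indepI sXI); apply: rho_le_split_rank monoN dsumN X.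
Qed.
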